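(* Let $k\ge 2$ and let $a_1,\dots,a_k$ be simple closed curves on an oriented surface such that $a_i$ and $a_{i+1}$ meet transversely in exactly one point and $a_i\cap a_j=\emptyset$ for $|i-j|\ge 2$. Write $a_i$ for the right-handed Dehn twist $t_{a_i}$, and put $b_i=t_{a_{i+1}}(a_i)$, $\bar b_i=t_{a_{i+1}}^{-1}(a_i)$ (curves, also standing for their Dehn twists). Then (a) $(a_{k-1}a_{k-2}\cdots a_2a_1)\cdot(a_ka_{k-1}\cdots a_2a_1)\sim a_k^{\,k}\cdot \bar b_{k-1}\cdots\bar b_2\bar b_1$; (b) $(a_1a_2\cdots a_{k-1}a_k)\cdot(a_1a_2\cdots a_{k-2}a_{k-1})\sim b_1b_2\cdots b_{k-1}\cdot a_k^{\,k}$.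
   Context: For a curve $x$ and mapping class $f$, $t_{f(x)}=f t_x f^{-1}$. Two words (finite sequences) of right-handed Dehn twists are related by $\sim$ if one is obtained from the other by a finite sequence of elementary transformations (Hurwitz moves): $\cdots t_{v}t_{w}\cdots \sim \cdots t_{t_v(w)}t_v\cdots$ and $\cdots t_vt_w\cdots\sim\cdots t_w t_{t_w^{-1}(v)}\cdots$. In particular equivalent words represent the same mapping class. *)

From Stdlib Require Import List Relations Arith.
Import ListNotations.

(* A type of curves C together with the action of right-handed Dehn twists on
   curves: tw v w = t_v(w), twinv v w = t_v^{-1}(w). *)
Record TwistAction := {
  curve :> Type;
  tw : curve -> curve -> curve;
  twinv : curve -> curve -> curve;
  tw_twinv : forall v w, tw v (twinv v w) = w;
  twinv_tw : forall v w, twinv v (tw v w) = w;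
  tw_self : forall x, tw x x = x;
  (* t_{f(x)} = f t_x f^{-1} for f = t_v, as actions on curves *)
  tw_conj : forall v x z, tw (tw v x) z = tw v (tw x (twinv v z))
}.

(* One elementary transformation (Hurwitz move) on words of Dehn twists,
   a word being written as the list of its curves. *)
Inductive hurwitz_step (T : TwistAction) : list T -> list T -> Prop :=
| hs_right : forall (u u' : list T) (v w : T),
    hurwitz_step T (u ++ v :: w :: u') (u ++ tw T v w :: v :: u')
| hs_left : forall (u u' : list T) (v w : T),
    hurwitz_step T (u ++ v :: w :: u') (u ++ w :: twinv T w v :: u').

Definition hurwitz_equiv (T : TwistAction) : list T -> list T -> Prop :=
  clos_refl_trans (list T) (hurwitz_step T).

(* Geometric hypotheses on a chain a_1, ..., a_k:
   a_i, a_{i+1} meet transversely once  ==> braid relations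
   a_i, a_j disjoint (|i-j| >= 2)        ==> t_{a_i}(a_j) = a_j. *)
Definition meet_once (T : TwistAction) (x y : T) : Prop :=
  tw T x (tw T y x) = y /\ tw T y (tw T x y) = x.

Definition disjoint_curves (T : TwistAction) (x y : T) : Prop :=
  tw T x y = y /\ tw T y x = x.

(* Passing from
   k to k+1 inserts a_{k+1} into the word; since a_{k+1} is disjoint from
   a_1, ..., a_{k-1} it slides freely next to a_k, the induction hypothesis
   rewrites the rest, and what remains is a block a_k^k next to a_k a_{k+1}.
   The braid relation a_k a_{k+1} a_k ~ a_{k+1} a_k a_{k+1}, applied k times,
   pushes a_{k+1} through that block, turning it into a_{k+1}^{k+1} and
   emitting the new twist b_k (resp. bar b_k). *)
From Stdlib Require Import List Relations Arith Lia.
Import ListNotations.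

Section HurwitzMoves.
Variable T : TwistAction.
Notation E := (hurwitz_equiv T).

Lemma hurwitz_equiv_app (p s l1 l2 : list T) :
  E l1 l2 -> E (p ++ l1 ++ s) (p ++ l2 ++ s).
Proof.
  induction 1 as [l1 l2 Hstep | | ]; [| apply rt_refl | eapply rt_trans; eauto].
  apply rt_step; destruct Hstep as [u u' v w | u u' v w].
  - replace (p ++ (u ++ v :: w :: u') ++ s) with ((p ++ u) ++ v :: w :: u' ++ s)
      by (rewrite <- !app_assoc; reflexivity).
    replace (p ++ (u ++ tw T v w :: v :: u') ++ s)
      with ((p ++ u) ++ tw T v w :: v :: u' ++ s)
      by (rewrite <- !app_assoc; reflexivity).
    constructor.
  - replace (p ++ (u ++ v :: w :: u') ++ s) with ((p ++ u) ++ v :: w :: u' ++ s)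
      by (rewrite <- !app_assoc; reflexivity).
    replace (p ++ (u ++ w :: twinv T w v :: u') ++ s)
      with ((p ++ u) ++ w :: twinv T w v :: u' ++ s)
      by (rewrite <- !app_assoc; reflexivity).
    constructor.
Qed.

Lemma hurwitz_equiv_app_l (p l1 l2 : list T) : E l1 l2 -> E (p ++ l1) (p ++ l2).
Proof.
  intro H; pose proof (hurwitz_equiv_app p [] l1 l2 H) as Hp.
  now rewrite !app_nil_r in Hp.
Qed.

Lemma hurwitz_equiv_app_r (s l1 l2 : list T) : E l1 l2 -> E (l1 ++ s) (l2 ++ s).
Proof. exact (hurwitz_equiv_app [] s l1 l2). Qed.

Lemma hurwitz_move_right (v w : T) (u : list T) : E (v :: w :: u) (tw T v w :: v :: u).
Proof. apply rt_step, (hs_right T []). Qed.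

Lemma hurwitz_move_left (v w : T) (u : list T) : E (v :: w :: u) (w :: twinv T w v :: u).
Proof. apply rt_step, (hs_left T []). Qed.

Lemma meet_once_braid (x y : T) : meet_once T x y -> E [x; y; x] [y; x; y].
Proof.
  intros [Hxy _].
  eapply rt_trans; [apply (hurwitz_equiv_app_l [x]), hurwitz_move_right |].
  pose proof (hurwitz_move_right x (tw T y x) [y]) as Hmove.
  now rewrite Hxy in Hmove.
Qed.

Lemma twinv_fixed (v z : T) : tw T v z = z -> twinv T v z = z.
Proof. intro Hfix; rewrite <- Hfix at 1; apply twinv_tw. Qed.

Lemma hurwitz_slide_right (v : T) (u : list T) :
  (forall z, In z u -> tw T v z = z) -> E (v :: u) (u ++ [v]).
Proof.
  induction u as [| z u IH]; intros Hfix; [apply rt_refl |].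
  eapply rt_trans; [apply hurwitz_move_right |].
  rewrite (Hfix z (or_introl eq_refl)).
  apply (hurwitz_equiv_app_l [z]), IH; intros; apply Hfix; now right.
Qed.

Lemma hurwitz_slide_left (v : T) (u : list T) :
  (forall z, In z u -> tw T v z = z) -> E (u ++ [v]) (v :: u).
Proof.
  induction u as [| z u IH]; intros Hfix; [apply rt_refl |].
  eapply rt_trans.
  - apply (hurwitz_equiv_app_l [z]), IH; intros; apply Hfix; now right.
  - pose proof (hurwitz_move_left z v u) as Hmove.
    now rewrite (twinv_fixed v z (Hfix z (or_introl eq_refl))) in Hmove.
Qed.

Lemma repeat_snoc (z : T) n : repeat z n ++ [z] = repeat z (S n).
Proof. induction n as [| n IH]; simpl; [| rewrite IH]; reflexivity. Qed.

Lemma braid_push_right (x y : T) : meet_once T x y -> forall n,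
  E (repeat x n ++ [y; x]) (tw T y x :: repeat y (S n)).
Proof.
  intros Hm n; induction n as [| n IH]; [apply hurwitz_move_right |].
  eapply rt_trans.
  { replace (repeat x (S n) ++ [y; x]) with (repeat x n ++ [x; y; x] ++ [])
      by (rewrite app_nil_r, <- repeat_snoc, <- app_assoc; reflexivity).
    apply hurwitz_equiv_app, meet_once_braid, Hm. }
  replace (repeat x n ++ [y; x; y] ++ []) with ((repeat x n ++ [y; x]) ++ [y])
    by (rewrite <- !app_assoc; reflexivity).
  replace (tw T y x :: repeat y (S (S n))) with ((tw T y x :: repeat y (S n)) ++ [y])
    by (simpl; rewrite (repeat_snoc y n); reflexivity).
  now apply hurwitz_equiv_app_r.
Qed.

Lemma braid_push_left (x y : T) : meet_once T x y -> forall n,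
  E (x :: y :: repeat x n) (repeat y (S n) ++ [twinv T y x]).
Proof.
  intros Hm n; induction n as [| n IH]; [apply hurwitz_move_left |].
  eapply rt_trans.
  { change (x :: y :: repeat x (S n)) with ([] ++ [x; y; x] ++ repeat x n).
    apply hurwitz_equiv_app, meet_once_braid, Hm. }
  now apply (hurwitz_equiv_app_l [y]).
Qed.

End HurwitzMoves.

Section Chains.
Variable T : TwistAction.
Notation E := (hurwitz_equiv T).

Definition is_chain (a : nat -> T) (k : nat) : Prop :=
  (forall i, 1 <= i -> i + 1 <= k -> meet_once T (a i) (a (i + 1))) /\
  (forall i j, 1 <= i <= k -> 1 <= j <= k -> i + 2 <= j ->
     disjoint_curves T (a i) (a j)).

Variable a : nat -> T.

Lemma is_chain_pred k : is_chain a (S k) -> is_chain a k.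
Proof. intros [Hadj Hdisj]; split; intros; [apply Hadj | apply Hdisj]; lia. Qed.

Lemma is_chain_meet_last n : is_chain a (S (S n)) -> meet_once T (a (S n)) (a (S (S n))).
Proof.
  intros [Hadj _]; replace (S (S n)) with (S n + 1) by lia; apply Hadj; lia.
Qed.

Lemma is_chain_last_fixes n : is_chain a (S (S n)) ->
  forall z, In z (map a (seq 1 n)) -> tw T (a (S (S n))) z = z.
Proof.
  intros [_ Hdisj] z Hz; apply in_map_iff in Hz as [j [<- Hj]]; apply in_seq in Hj.
  apply (Hdisj j (S (S n))); lia.
Qed.

Lemma map_seq1_S (f : nat -> T) n : map f (seq 1 (S n)) = map f (seq 1 n) ++ [f (S n)].
Proof. now rewrite seq_S, map_app. Qed.

Let b i := tw T (a (i + 1)) (a i).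
Let bbar i := twinv T (a (i + 1)) (a i).

Lemma chain_word_bbar n : is_chain a (S n) ->
  E (rev (map a (seq 1 n)) ++ rev (map a (seq 1 (S n))))
    (repeat (a (S n)) (S n) ++ rev (map bbar (seq 1 n))).
Proof.
  induction n as [| n IH]; intros Hch; [apply rt_refl |].
  specialize (IH (is_chain_pred _ Hch)).
  rewrite (map_seq1_S bbar), !(map_seq1_S a (S n)), (map_seq1_S a n) in *.
  set (A := map a (seq 1 n)) in *; set (x := a (S n)) in *; set (y := a (S (S n))).
  rewrite !rev_app_distr in *; simpl in *.
  eapply rt_trans.
  { replace (x :: rev A ++ y :: x :: rev A) with ([x] ++ (rev A ++ [y]) ++ x :: rev A)
      by (rewrite <- app_assoc; reflexivity).
    apply hurwitz_equiv_app, hurwitz_slide_left.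
    intros z Hz; apply is_chain_last_fixes; [exact Hch | now apply in_rev]. }
  eapply rt_trans; [apply (hurwitz_equiv_app_l _ [x; y]), IH |].
  replace (bbar (S n)) with (twinv T y x) by (unfold bbar, x, y; now rewrite Nat.add_1_r).
  pose proof (hurwitz_equiv_app_r T (rev (map bbar (seq 1 n))) _ _
                (braid_push_left T x y (is_chain_meet_last _ Hch) (S n))) as Hpush.
  now rewrite <- app_assoc in Hpush.
Qed.

Lemma chain_word_b n : is_chain a (S n) ->
  E (map a (seq 1 (S n)) ++ map a (seq 1 n))
    (map b (seq 1 n) ++ repeat (a (S n)) (S n)).
Proof.
  induction n as [| n IH]; intros Hch; [apply rt_refl |].
  specialize (IH (is_chain_pred _ Hch)).
  rewrite (map_seq1_S b), !(map_seq1_S a (S n)), (map_seq1_S a n) in *.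
  set (A := map a (seq 1 n)) in *; set (x := a (S n)) in *; set (y := a (S (S n))).
  eapply rt_trans.
  { replace (((A ++ [x]) ++ [y]) ++ A ++ [x]) with ((A ++ [x]) ++ (y :: A) ++ [x])
      by (rewrite <- !app_assoc; reflexivity).
    apply hurwitz_equiv_app, hurwitz_slide_right, is_chain_last_fixes, Hch. }
  replace ((A ++ [x]) ++ (A ++ [y]) ++ [x]) with (((A ++ [x]) ++ A) ++ [y; x])
    by (rewrite <- !app_assoc; reflexivity).
  eapply rt_trans; [apply hurwitz_equiv_app_r, IH |].
  replace (b (S n)) with (tw T y x) by (unfold b, x, y; now rewrite Nat.add_1_r).
  rewrite <- !app_assoc; apply hurwitz_equiv_app_l.
  apply braid_push_right, is_chain_meet_last, Hch.
Qed.

End Chains.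

Theorem lemma3p3 (T : TwistAction) (k : nat) (a : nat -> T)
  (hk : 2 <= k)
  (hadj : forall i, 1 <= i -> i + 1 <= k -> meet_once T (a i) (a (i + 1)))
  (hdisj : forall i j, 1 <= i <= k -> 1 <= j <= k -> i + 2 <= j ->
     disjoint_curves T (a i) (a j)) :
  hurwitz_equiv T
    (rev (map a (seq 1 (k - 1))) ++ rev (map a (seq 1 k)))
    (repeat (a k) k ++ rev (map (fun i => twinv T (a (i + 1)) (a i)) (seq 1 (k - 1))))
  /\
  hurwitz_equiv T
    (map a (seq 1 k) ++ map a (seq 1 (k - 1)))
    (map (fun i => tw T (a (i + 1)) (a i)) (seq 1 (k - 1)) ++ repeat (a k) k).
Proof.
  destruct k as [| n]; [lia |].
  replace (S n - 1) with n by lia.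
  assert (Hch : is_chain T a (S n)) by (split; assumption).
  split; [apply chain_word_bbar | apply chain_word_b]; exact Hch.
Qed.
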